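(* Let $\mathcal E$ be a nest on a complex Banach space $X$, let $\Phi$ be a support function on $\mathcal E$ and let $T\in\mathcal M(\Phi)$ be an operator of rank $n$. Then $T$ can be written as a sum of $n$ rank-one operators each lying in $\mathcal M(\Phi)$.
   Context: A nest $\mathcal E$ on $X$ is a family of closed linear subspaces of $X$, totally ordered by inclusion, containing $\{0\}$ and $X$, closed under arbitrary meets (intersections) and joins (norm-closed linear spans of unions). A support function on $\mathcal E$ is an inclusion-preserving map $\Phi:\mathcal E\to\mathcal E$. $\mathcal M(\Phi)=\{T\in\mathcal B(X): TE\subseteq\Phi(E)\ \forall E\in\mathcal E\}$. *)

From mathcomp Require Import all_boot all_order all_algebra.
From mathcomp Require Import complex.
From mathcomp Require Import all_classical all_reals all_analysis.
Import GRing.Theory Num.Theory.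
Set Implicit Arguments. Unset Strict Implicit. Unset Printing Implicit Defensive.
Local Open Scope classical_set_scope.
Local Open Scope ring_scope.

(* The complex field over a real type R is R[i] (mathcomp-real-closed).
   A complex Banach space is a completeNormedModType R[i]. *)

Section Nests.
Variables (R : realType) (X : completeNormedModType R[i]).

Definition subspace (E : set X) : Prop :=
  E 0 /\ (forall x y, E x -> E y -> E (x + y)) /\
  (forall (a : R[i]) x, E x -> E (a *: x)).

Definition closed_subspace (E : set X) : Prop := subspace E /\ closed E.

Definition lin_span (S : set X) : set X :=
  [set x | exists (m : nat) (c : 'I_m -> R[i]) (v : 'I_m -> X),
     (forall i, S (v i)) /\ x = \sum_(i < m) c i *: v i].

Definition closed_span (S : set X) : set X := closure (lin_span S).

Definition nest (N : set (set X)) : Prop :=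
  (forall E, N E -> closed_subspace E) /\
  (forall E F, N E -> N F -> E `<=` F \/ F `<=` E) /\
  N [set 0] /\ N setT /\
  (forall F : set (set X), F `<=` N -> N (\bigcap_(E in F) E)) /\
  (forall F : set (set X), F `<=` N -> N (closed_span (\bigcup_(E in F) E))).

Definition support_function (N : set (set X)) (Phi : set X -> set X) : Prop :=
  (forall E, N E -> N (Phi E)) /\
  (forall E F, N E -> N F -> E `<=` F -> Phi E `<=` Phi F).

(* bounded (= continuous) linear operator on X *)
Definition bounded_op (T : X -> X) : Prop :=
  (forall (a : R[i]) x y, T (a *: x + y) = a *: T x + T y) /\ continuous T.

Definition M_Phi (N : set (set X)) (Phi : set X -> set X) (T : X -> X) : Prop :=
  bounded_op T /\ (forall E, N E -> T @` E `<=` Phi E).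

Definition has_rank (T : X -> X) (n : nat) : Prop :=
  exists v : 'I_n -> X,
    (forall c : 'I_n -> R[i], \sum_(i < n) c i *: v i = 0 -> forall i, c i = 0) /\
    range T = [set \sum_(i < n) c i *: v i | c in [set: 'I_n -> R[i]]].

End Nests.

(* Let T in M(Phi) have rank n, its range spanned by independent vectors
   v_0, ..., v_{n-1}.  For E in the nest, the image T(E) is a subspace of the
   finite-dimensional space range T, and these images form a chain because
   the nest does.  Hence there is a nonzero image of least dimension, and any
   nonzero x = T y0 in it lies in every nonzero image T(E).  Choosing a
   coordinate p with x_p <> 0, the operator T1 y := ((T y)_p / x_p) x has rank
   one, and it lies in M(Phi): if T1 e <> 0 for some e in E then T e <> 0, so
   x is in T(E), which is contained in Phi(E).  The remainder T - T1 lies in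
   M(Phi) and has rank n - 1 (its range is spanned by the v_i, i <> p), so the
   theorem follows by induction on n.

   The only analytic input is the continuity of T1, i.e. of the coordinate
   functionals of range T.  It follows from the classical bound
   |c_i| <= K |sum_j c_j v_j| for an independent family, proved by induction
   on its size from the completeness of the complex numbers. *)

From Pilot Require Import Defs.
From mathcomp Require Import all_boot all_order all_algebra.
From mathcomp Require Import complex.
From mathcomp Require Import all_classical all_reals all_analysis.
From mathcomp Require Import lra.
Import GRing.Theory Num.Theory.
Import Order.TTheory numFieldNormedType.Exports.
Local Open Scope classical_set_scope.
Local Open Scope ring_scope.
Set Implicit Arguments. Unset Strict Implicit. Unset Printing Implicit Defensive.

Definition cauchy_seq (K : numDomainType) (a : nat -> K) : Prop :=
  forall e : K, 0 < e ->
    exists N, forall n m, (N <= n)%N -> (N <= m)%N -> `|a n - a m| < e.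

Definition seq_limit (K : numDomainType) (a : nat -> K) (l : K) : Prop :=
  forall e : K, 0 < e -> exists N, forall n, (N <= n)%N -> `|a n - l| < e.

Section ComplexCompleteness.
Variable R : realType.
Local Notation C := R[i].
Local Notation Re := complex.Re.
Local Notation Im := complex.Im.
Local Open Scope complex_scope.

Lemma ReB (x y : C) : Re (x - y) = Re x - Re y.
Proof. by case: x => a b; case: y => c d. Qed.

Lemma ImB (x y : C) : Im (x - y) = Im x - Im y.
Proof. by case: x => a b; case: y => c d. Qed.

Lemma normc_Re_le (z : C) : (`|Re z|)%:C <= `|z|.
Proof.
rewrite normc_def lecR -sqrtr_sqr; apply: ler_wsqrtr.
by rewrite lerDl sqr_ge0.
Qed.

Lemma normc_Im_le (z : C) : (`|Im z|)%:C <= `|z|.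
Proof.
rewrite normc_def lecR -sqrtr_sqr; apply: ler_wsqrtr.
by rewrite lerDr sqr_ge0.
Qed.

Lemma normc_le_ReIm (z : C) : `|z| <= (`|Re z| + `|Im z|)%:C.
Proof.
have hRe := normr_ge0 (Re z); have hIm := normr_ge0 (Im z).
rewrite normc_def lecR -(ger0_norm (addr_ge0 hRe hIm)) -sqrtr_sqr.
apply: ler_wsqrtr.
rewrite -(real_normK (num_real (Re z))) -(real_normK (num_real (Im z))).
rewrite sqrrD; nra.
Qed.

Lemma complex_gt0 (e : C) : 0 < e -> 0 < Re e /\ e = (Re e)%:C.
Proof. by case: e => a b; rewrite ltcE /= => /andP[/eqP -> ha]. Qed.

Lemma real_cauchy_limit (a : nat -> R) : cauchy_seq a -> exists l, seq_limit a l.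
Proof.
move=> ha.
have ca : cauchy (a @ \oo).
  apply: cauchy_exP => e e0; have [N HN] := ha e e0.
  by exists (a N); exists N => // n /= Nn; exact: HN.
have [l Hl] := (cvg_ex _).1 ((cauchy_cvgP _).1 ca).
exists l => e e0; have [N _ HN] := (cvgrPdist_lt _ _).1 Hl e e0.
by exists N => n Nn; rewrite distrC; exact: HN.
Qed.

(* Completeness of R[i]: the real and imaginary parts converge separately. *)
Lemma complex_cauchy_limit (z : nat -> C) : cauchy_seq z -> exists l, seq_limit z l.
Proof.
move=> hz.
have hzR e : 0 < e -> exists N, forall n m, (N <= n)%N -> (N <= m)%N ->
    `|z n - z m| < e%:C.
  by move=> e0; apply: hz; rewrite ltcR.
have [a Ha] : exists a, seq_limit (fun n => Re (z n)) a.
  apply: real_cauchy_limit => e /hzR [N HN]; exists N => n m Nn Nm.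
  by rewrite -ReB -ltcR; exact: le_lt_trans (normc_Re_le _) (HN _ _ Nn Nm).
have [b Hb] : exists b, seq_limit (fun n => Im (z n)) b.
  apply: real_cauchy_limit => e /hzR [N HN]; exists N => n m Nn Nm.
  by rewrite -ImB -ltcR; exact: le_lt_trans (normc_Im_le _) (HN _ _ Nn Nm).
exists (a +i* b) => e /complex_gt0 [e0 ->].
have e20 : 0 < Re e / 2 by rewrite divr_gt0.
have [Na HNa] := Ha _ e20; have [Nb HNb] := Hb _ e20.
exists (maxn Na Nb) => n Nn.
apply: le_lt_trans (normc_le_ReIm _) _; rewrite ltcR ReB ImB /=.
have := HNa n (leq_trans (leq_maxl _ _) Nn).
have := HNb n (leq_trans (leq_maxr _ _) Nn).
lra.
Qed.

Lemma eventually_small (e B : C) : 0 < e -> 0 <= B ->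
  exists N, forall n, (N <= n)%N -> B / (n.+1)%:R < e.
Proof.
move=> e0 B0.
have B1 : 0 < B + 1 by rewrite ltr_wpDl.
have /complex_gt0 [r0 er] : 0 < e / (B + 1) by rewrite divr_gt0.
set r := Re (e / (B + 1)) in r0 er.
exists (Num.bound r^-1) => n Nn.
have inv_lt : ((n.+1)%:R : C)^-1 < e / (B + 1).
  have h1 : r^-1 < (n.+1)%:R.
    have ri0 : 0 <= r^-1 by rewrite invr_ge0 ltW.
    apply: lt_le_trans (archi_boundP ri0) _; rewrite ler_nat; exact: leqW.
  have h2 : ((n.+1)%:R : R)^-1 < r.
    by rewrite -[X in _ < X]invrK ltf_pV2 // ?posrE ?invr_gt0.
  have -> : ((n.+1)%:R : C) = ((n.+1)%:R : R)%:C by rewrite rmorph_nat.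
  by rewrite er -fmorphV ltcR.
apply: le_lt_trans (ler_wpM2l B0 (ltW inv_lt)) _.
by rewrite mulrA ltr_pdivrMr // mulrDr mulr1 mulrC ltrDl.
Qed.
End ComplexCompleteness.

Section FiniteCombinations.
Variables (R : realType) (X : normedModType R[i]).
Local Notation C := R[i].

Definition lc k (v : 'I_k -> X) (c : 'I_k -> C) : X := \sum_(i < k) c i *: v i.

Definition indep k (v : 'I_k -> X) : Prop := forall c, lc v c = 0 -> forall i, c i = 0.

Lemma lc0 k (v : 'I_k -> X) : lc v (fun=> 0) = 0.
Proof. by rewrite /lc big1 // => i _; rewrite scale0r. Qed.

Lemma lcD k (v : 'I_k -> X) c1 c2 : lc v (fun i => c1 i + c2 i) = lc v c1 + lc v c2.
Proof. by rewrite /lc -big_split; apply: eq_bigr => i _; rewrite scalerDl. Qed.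

Lemma lcZ k (v : 'I_k -> X) a c : lc v (fun i => a * c i) = a *: lc v c.
Proof. by rewrite /lc scaler_sumr; apply: eq_bigr => i _; rewrite scalerA. Qed.

Lemma lcN k (v : 'I_k -> X) c : lc v (fun i => - c i) = - lc v c.
Proof. by rewrite /lc -sumrN; apply: eq_bigr => i _; rewrite scaleNr. Qed.

Lemma lcB k (v : 'I_k -> X) c1 c2 : lc v (fun i => c1 i - c2 i) = lc v c1 - lc v c2.
Proof. by rewrite lcD lcN. Qed.

Lemma indep_inj k (v : 'I_k -> X) c1 c2 :
  indep v -> lc v c1 = lc v c2 -> forall i, c1 i = c2 i.
Proof.
move=> hv e i; apply/eqP; rewrite -subr_eq0; apply/eqP.
by apply: (hv (fun i => c1 i - c2 i)); rewrite lcB e subrr.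
Qed.

Definition ext k (p : 'I_k.+1) (c : 'I_k -> C) (a : C) (i : 'I_k.+1) : C :=
  if unlift p i is Some j then c j else a.

Lemma ext_p k p c a : @ext k p c a p = a.
Proof. by rewrite /ext unlift_none. Qed.

Lemma ext_lift k p c a j : @ext k p c a (lift p j) = c j.
Proof. by rewrite /ext liftK. Qed.

Lemma lc_split k (v : 'I_k.+1 -> X) p c :
  lc v c = c p *: v p + lc (fun j => v (lift p j)) (fun j => c (lift p j)).
Proof. by rewrite /lc (bigD1_ord p). Qed.

Lemma lc_ext k (v : 'I_k.+1 -> X) p c a :
  lc v (ext p c a) = a *: v p + lc (fun j => v (lift p j)) c.
Proof.
rewrite (lc_split _ p) ext_p; congr (_ + _).
by apply: eq_bigr => j _; rewrite ext_lift.
Qed.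

Lemma indep_lift k (v : 'I_k.+1 -> X) p : indep v -> indep (fun j => v (lift p j)).
Proof.
move=> hv c hc j.
have := hv (ext p c 0); rewrite lc_ext scale0r add0r => /(_ hc (lift p j)).
by rewrite ext_lift.
Qed.

Lemma lc_coef_limit k (w : 'I_k -> X) (cs : nat -> 'I_k -> C) (l : 'I_k -> C) :
  (forall j, seq_limit (fun n => cs n j) (l j)) ->
  forall e : C, 0 < e -> exists N, forall n, (N <= n)%N -> `|lc w (cs n) - lc w l| < e.
Proof.
move=> hl e e0.
set S := \sum_j `|w j|.
have S0 : 0 <= S by rewrite sumr_ge0 // => j _; exact: normr_ge0.
have S1 : 0 < S + 1 by rewrite ltr_wpDl.
set e1 := e / (S + 1).
have e10 : 0 < e1 by rewrite divr_gt0.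
have [Nf HNf] := boolp.choice (fun j => hl j e1 e10).
exists (\max_j Nf j) => n Nn.
rewrite -lcB /lc; apply: le_lt_trans (ler_norm_sum _ _ _) _.
apply: (@le_lt_trans _ _ (e1 * S)).
  rewrite mulr_sumr; apply: ler_sum => j _; rewrite normrZ.
  have Nj : (Nf j <= n)%N by exact: leq_trans (leq_bigmax j) Nn.
  by apply: ler_wpM2r; [exact: normr_ge0 | exact: ltW (HNf j n Nj)].
by rewrite -[X in _ < X](divfK (lt0r_neq0 S1)) ltr_pM2l // ltrDl.
Qed.

Lemma norm_eq0_small (x : X) : (forall e : C, 0 < e -> `|x| < e) -> x = 0.
Proof.
move=> H; apply/eqP; apply: contraT => hx.
by have := H `|x|; rewrite normr_gt0 ltxx => /(_ hx).
Qed.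

(* The coordinates of an approximating
   sequence form Cauchy sequences, whose limits would express u. *)
Lemma span_dist_gt0 k (w : 'I_k -> X) (u : X) (K : C) :
  0 <= K -> (forall c i, `|c i| <= K * `|lc w c|) -> (forall l, u <> lc w l) ->
  exists2 d : C, 0 < d & forall c, d <= `|u - lc w c|.
Proof.
move=> K0 HK hu; apply: contrapT => no_gap.
have approx n : exists c, `|u - lc w c| < ((n.+1)%:R : C)^-1.
  apply: contrapT => far; apply: no_gap.
  exists ((n.+1)%:R)^-1; first by rewrite invr_gt0 ltr0n.
  move=> c; rewrite real_leNgt ?num_real //.
  by apply/negP => close; apply: far; exists c.
have [cs Hcs] := boolp.choice approx.
have cauchy_coef j : cauchy_seq (fun n => cs n j).
  move=> e e0.
  have e20 : 0 < e / 2 by rewrite divr_gt0 // ltr0n.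
  have [N HN] := eventually_small e20 K0.
  exists N => n m Nn Nm.
  apply: le_lt_trans (HK (fun j => cs n j - cs m j) j) _.
  have -> : lc w (fun j => cs n j - cs m j) = (u - lc w (cs m)) - (u - lc w (cs n)).
    by rewrite lcB opprB [RHS]addrC [RHS]addrA subrK.
  apply: le_lt_trans (ler_wpM2l K0 (ler_normB _ _)) _.
  rewrite mulrDr [X in _ < X]splitr; apply: ltrD.
    exact: le_lt_trans (ler_wpM2l K0 (ltW (Hcs m))) (HN m Nm).
  exact: le_lt_trans (ler_wpM2l K0 (ltW (Hcs n))) (HN n Nn).
have [l Hl] := boolp.choice (fun j => complex_cauchy_limit (cauchy_coef j)).
apply: (hu l); apply/eqP; rewrite -subr_eq0; apply/eqP.
apply: norm_eq0_small => e e0.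
have e20 : 0 < e / 2 by rewrite divr_gt0 // ltr0n.
have [N1 HN1] := eventually_small e20 ler01.
have [N2 HN2] := lc_coef_limit w Hl e20.
set n := maxn N1 N2.
have close_u : `|u - lc w (cs n)| < e / 2.
  by apply: lt_trans (Hcs n) _; rewrite -[_^-1]mul1r; apply: HN1; exact: leq_maxl.
apply: le_lt_trans (ler_distD (lc w (cs n)) _ _) _.
by rewrite [X in _ < X]splitr; apply: ltrD => //; apply: HN2; exact: leq_maxr.
Qed.

(* Induction on
   the size of the family, using span_dist_gt0 for the last vector. *)
Lemma coef_bound k (v : 'I_k -> X) : indep v ->
  exists2 K : C, 0 <= K & forall c i, `|c i| <= K * `|lc v c|.
Proof.
elim: k v => [|k IH] v hv; first by exists 0 => // c [].
pose p := @ord_max k.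
pose w j := v (lift p j).
pose u := v p.
have [Kw Kw0 HKw] := IH w (indep_lift (p := p) hv).
have u_out l : u <> lc w l.
  move=> hl; have := hv (ext p (fun j => - l j) 1).
  rewrite lc_ext lcN scale1r -/u -/w hl subrr => /(_ erefl p).
  by rewrite ext_p => /eqP; rewrite oner_eq0.
have [d d0 Hd] := span_dist_gt0 Kw0 HKw u_out.
have di0 : 0 <= d^-1 by rewrite invr_ge0 ltW.
pose Ki := Kw * (1 + d^-1 * `|u|).
have Ki0 : 0 <= Ki by rewrite mulr_ge0 // addr_ge0 // mulr_ge0.
exists (d^-1 + Ki); first by rewrite addr_ge0.
move=> c i; set x := lc v c.
have hx : x = c p *: u + lc w (fun j => c (lift p j)) := lc_split v p c.
have bound_p : `|c p| <= d^-1 * `|x|.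
  have [->|cp0] := eqVneq (c p) 0; first by rewrite normr0 mulr_ge0.
  have -> : x = c p *: (u - lc w (fun j => - c (lift p j) / c p)).
    rewrite hx scalerBr -lcZ.
    have -> : (fun j => c p * (- c (lift p j) / c p)) = (fun j => - c (lift p j)).
      by apply: funext => j; rewrite mulrC divfK.
    by rewrite lcN opprK.
  rewrite normrZ mulrCA; apply: ler_peMr; first exact: normr_ge0.
  by rewrite mulrC ler_pdivlMr // mul1r; exact: Hd.
have bound_lift j : `|c (lift p j)| <= Ki * `|x|.
  apply: le_trans (HKw (fun j => c (lift p j)) j) _.
  rewrite /Ki -mulrA; apply: ler_wpM2l; first exact: Kw0.
  have -> : lc w (fun j => c (lift p j)) = x - c p *: u by rewrite hx addrC addKr.
  apply: le_trans (ler_normB _ _) _.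
  rewrite normrZ mulrDl mul1r lerD2l mulrAC.
  by apply: ler_wpM2r; [exact: normr_ge0 | exact: bound_p].
have [j ->|->] := unliftP p i.
  apply: le_trans (bound_lift j) _.
  by apply: ler_wpM2r; [exact: normr_ge0 | rewrite lerDr].
apply: le_trans bound_p _.
by apply: ler_wpM2r; [exact: normr_ge0 | rewrite lerDl].
Qed.

End FiniteCombinations.

Section ChainsOfRowSpaces.
Variable F : fieldType.

Definition row_subspace m (S : set 'rV[F]_m) : Prop :=
  S 0 /\ (forall x y, S x -> S y -> S (x + y)) /\ (forall a x, S x -> S (a *: x)).

Lemma row_subspace_mul m k (S : set 'rV[F]_m) (u : 'rV[F]_k) (B : 'M[F]_(k, m)) :
  row_subspace S -> (forall i, S (row i B)) -> S (u *m B).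
Proof.
move=> [S0 [SD SZ]] SB; rewrite mulmx_sum_row.
by apply: (big_ind S) => // i _; apply: SZ.
Qed.

(* Every row subspace is the row space of a matrix: take a matrix of maximal
   rank among those whose rows lie in S. *)
Lemma row_subspace_mx m (S : set 'rV[F]_m) : row_subspace S ->
  exists A : 'M[F]_m, forall r, S r <-> (r <= A)%MS.
Proof.
move=> hS.
pose Pk k := exists B : 'M[F]_m, (forall i, S (row i B)) /\ \rank B = k.
have Pex : exists k, `[< Pk k >].
  exists 0%N; apply/asboolP; exists 0; split; last exact: mxrank0.
  by move=> i; rewrite row0; case: hS.
have Pub k : `[< Pk k >] -> (k <= m)%N.
  by move=> /asboolP [B [_ <-]]; exact: rank_leq_col.
case: (ex_maxnP Pex Pub) => k0 /asboolP [B0 [HB0 rk0]] Hmax.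
exists B0 => r; split; last by move=> /submxP [D ->]; apply: row_subspace_mul.
move=> Sr; apply: contraT => r_out.
pose B1 := (B0 + r)%MS.
have lt_B1 : (B0 < B1)%MS.
  rewrite ltmxE addsmxSl /=; apply: contra r_out => h.
  exact: submx_trans (addsmxSr B0 r) h.
have HB1 i : S (row i B1).
  have : (row i B1 <= col_mx B0 r)%MS.
    by apply: submx_trans (row_sub i B1) _; rewrite /B1 addsmxE.
  move=> /submxP [D ->]; rewrite -[D]hsubmxK mul_row_col.
  have [_ [SD _]] := hS; apply: SD; apply: row_subspace_mul => //.
  by move=> j; rewrite row_id.
have := Hmax (\rank B1); rewrite -rk0 leqNgt rank_ltmx // => H; apply: H.
by apply/asboolP; exists B1.
Qed.

(* In a chain of row spaces, some nonzero row vector lies in every nonzero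
   member: any nonzero vector of a nonzero member of minimal rank. *)
Lemma chain_common_row m (I : Type) (P : set I) (A : I -> 'M[F]_m) :
  (forall i j, P i -> P j -> (A i <= A j)%MS \/ (A j <= A i)%MS) ->
  (exists2 i, P i & A i != 0) ->
  exists2 r : 'rV[F]_m, r != 0 & forall i, P i -> A i != 0 -> (r <= A i)%MS.
Proof.
move=> chain [i1 Pi1 Ai1].
pose Pm k := `[< exists i, [/\ P i, A i != 0 & \rank (A i) = k] >].
have Pex : exists k, Pm k by exists (\rank (A i1)); apply/asboolP; exists i1.
case: (ex_minnP Pex) => _ /asboolP [i0 [Pi0 Ai0 <-]] min_rank.
have [r r_sub r0] := rowV0Pn Ai0.
exists r => // i Pi Ai.
have [sub_i|sub_i0] := chain i i0 Pi Pi0; last exact: submx_trans r_sub sub_i0.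
have rk : (\rank (A i0) <= \rank (A i))%N.
  by apply: min_rank; apply/asboolP; exists i.
apply: submx_trans r_sub _; have [_ <-] := mxrank_leqif_sup sub_i.
by rewrite eqn_leq rk mxrankS.
Qed.

End ChainsOfRowSpaces.

Section RangeCoordinates.
Variables (R : realType) (X : normedModType R[i]).
Local Notation C := R[i].

Definition linear_map (T : X -> X) : Prop :=
  forall (a : C) x y, T (a *: x + y) = a *: T x + T y.

Lemma linear_map_props (T : X -> X) : linear_map T ->
  [/\ T 0 = 0, forall x y, T (x + y) = T x + T y,
      forall (a : C) x, T (a *: x) = a *: T x & forall x y, T (x - y) = T x - T y].
Proof.
move=> hT.
have T0 : T 0 = 0.
  have h := hT 1 0 0; rewrite !scale1r addr0 in h.
  by apply: (addrI (T 0)); rewrite addr0 -h.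
have TD x y : T (x + y) = T x + T y by rewrite -[x]scale1r hT !scale1r.
split => // [a x|x y]; first by rewrite -[a *: x]addr0 hT T0 addr0.
by rewrite addrC -scaleN1r hT scaleN1r addrC.
Qed.

Lemma dominated_continuous (V W : normedModType C) (g : X -> V) (h : X -> W) (K : C) :
  0 <= K -> continuous h ->
  (forall y y0, `|g y0 - g y| <= K * `|h y0 - h y|) -> continuous g.
Proof.
move=> K0 hc H y0; apply/(@cvgrPdist_lt _ V) => e e0.
have K1 : 0 < K + 1 by rewrite ltr_wpDl.
have e'0 : 0 < e / (K + 1) by rewrite divr_gt0.
have near_h := (cvgrPdist_lt _ _).1 (hc y0) _ e'0.
near=> y.
have hy : `|h y0 - h y| < e / (K + 1) by near: y; exact: near_h.
apply: le_lt_trans (H y y0) _.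
apply: (@le_lt_trans _ _ (K * (e / (K + 1)))).
  by apply: ler_wpM2l; [exact: K0 | exact: ltW].
by rewrite mulrA ltr_pdivrMr // mulrDr mulr1 mulrC ltrDl.
Unshelve. all: by end_near.
Qed.

Variables (k : nat) (T : X -> X) (v : 'I_k -> X).
Hypotheses (T_lin : linear_map T) (T_cont : continuous T) (v_indep : indep v).
Hypothesis T_range : range T = [set lc v c | c in setT].

Lemma range_lc y : exists c, T y = lc v c.
Proof.
have : range T (T y) by exists y.
by rewrite T_range => -[c _ <-]; exists c.
Qed.

Definition range_coord y : 'I_k -> C := projT1 (cid (range_lc y)).

Lemma range_coordE y : T y = lc v (range_coord y).
Proof. exact: projT2 (cid (range_lc y)). Qed.

Lemma range_coord_eq y c : T y = lc v c -> range_coord y = c.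
Proof.
by move=> hy; apply: funext; apply: indep_inj v_indep _; rewrite -range_coordE.
Qed.

Lemma range_coord_surj c : exists y, range_coord y = c.
Proof.
have : [set lc v c | c in setT] (lc v c) by exists c.
by rewrite -T_range => -[y _ hy]; exists y; apply: range_coord_eq.
Qed.

Lemma range_coord_linear (a : C) y z i :
  range_coord (a *: y + z) i = a * range_coord y i + range_coord z i.
Proof.
suff -> : range_coord (a *: y + z) = fun i => a * range_coord y i + range_coord z i by [].
by apply: range_coord_eq; rewrite T_lin !range_coordE -lcZ -lcD.
Qed.

(* Each coordinate functional is continuous, by the coordinate bound. *)
Lemma range_coord_continuous i : continuous (fun y => range_coord y i : C^o).
Proof.
have [_ _ _ TB] := linear_map_props T_lin.
have [K K0 HK] := coef_bound v_indep.
apply: (dominated_continuous (V := C^o) K0 T_cont) => y y0.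
have -> : range_coord y0 i - range_coord y i = range_coord (y0 - y) i.
  suff -> : range_coord (y0 - y) = fun i => range_coord y0 i - range_coord y i by [].
  by apply: range_coord_eq; rewrite TB !range_coordE lcB.
by rewrite -TB range_coordE; exact: HK.
Qed.

End RangeCoordinates.

Section RankOnePeeling.
Variables (R : realType) (X : completeNormedModType R[i]).
Local Notation C := R[i].

Definition common_image_vector (N : set (set X)) (T : X -> X) (x : X) : Prop :=
  forall E, N E -> forall e, E e -> T e != 0 -> (T @` E) x.

(* Defs.subspace is qualified: the topology library also exports a
   `subspace` (the subspace topology). *)
Lemma nest_subspace (N : set (set X)) (E : set X) : nest N -> N E -> Defs.subspace E.
Proof. by move=> [hs _] NE; case: (hs E NE). Qed.

(* The images T(E), E in the nest, form a chain of subspaces of the finite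
   dimensional space range T; a nonzero vector of the smallest nonzero one is
   common to all nonzero images. *)
Lemma nest_common_image_vector (N : set (set X)) k (T : X -> X) (v : 'I_k.+1 -> X) :
  nest N -> linear_map T -> indep v -> range T = [set lc v c | c in setT] ->
  exists2 y0, T y0 != 0 & common_image_vector N T (T y0).
Proof.
move=> hN T_lin v_indep T_range.
have [_ [N_chain [_ [N_T _]]]] := hN.
have [T0 TD TZ _] := linear_map_props T_lin.
have lc_row c : lc v (fun i => (\row_j c j : 'rV[C]_k.+1) 0 i) = lc v c.
  by congr lc; apply: funext => i; rewrite mxE.
have lc_row0 : lc v (fun i => (0 : 'rV[C]_k.+1) 0 i) = 0.
  by rewrite -(lc0 v); congr lc; apply: funext => i; rewrite mxE.
have lc_row_eq0 (r : 'rV[C]_k.+1) : lc v (fun i => r 0 i) = 0 -> r = 0.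
  by move=> h; apply/rowP => i; rewrite mxE; exact: (v_indep _ h i).
pose S E (r : 'rV[C]_k.+1) := (T @` E) (lc v (fun i => r 0 i)).
have S_sub E : N E -> row_subspace (S E).
  move=> NE; have [E0 [ED EZ]] := nest_subspace hN NE.
  split; [|split].
  - by exists 0; rewrite // T0 lc_row0.
  - move=> r s [x Ex hx] [y Ey hy]; exists (x + y); first exact: ED.
    by rewrite TD hx hy -lcD -lc_row; congr lc; apply: funext => i; rewrite !mxE.
  - move=> a r [x Ex hx]; exists (a *: x); first exact: EZ.
    by rewrite TZ hx -lcZ -lc_row; congr lc; apply: funext => i; rewrite !mxE.
have /boolp.choice [A HA] : forall E, exists A : 'M[C]_k.+1,
    N E -> forall r, S E r <-> (r <= A)%MS.
  move=> E; have [NE|nNE] := pselect (N E); last by exists 0 => /nNE.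
  by have [A HA] := row_subspace_mx (S_sub E NE); exists A.
have A_mono E F : N E -> N F -> E `<=` F -> (A E <= A F)%MS.
  move=> NE NF EF; apply/row_subP => i; apply/(HA F NF).
  by have [x Ex hx] := (HA E NE _).2 (row_sub i (A E)); exists x => //; exact: EF.
have A_nz E e : N E -> E e -> T e != 0 -> A E != 0.
  move=> NE Ee Te; apply/rowV0Pn; exists (\row_j range_coord T_range e j).
    by apply/(HA E NE); exists e; rewrite // lc_row (range_coordE T_range).
  apply/eqP => row0; move/eqP: Te; apply.
  by rewrite (range_coordE T_range) -lc_row row0 lc_row0.
have [y1 Ty1] : exists y1, T y1 != 0.
  have [y1 hy1] := range_coord_surj v_indep T_range (fun i => (i == ord0)%:R).
  exists y1 => //; apply/eqP => Ty1.
  have := v_indep (range_coord T_range y1) _ ord0.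
  rewrite -(range_coordE T_range) hy1 eqxx => /(_ Ty1)/eqP.
  by rewrite oner_eq0.
have A_chain E F : N E -> N F -> (A E <= A F)%MS \/ (A F <= A E)%MS.
  move=> NE NF; have [EF|FE] := N_chain E F NE NF.
  - by left; apply: A_mono.
  - by right; apply: A_mono.
have A_T : A setT != 0 := A_nz _ y1 N_T I Ty1.
have [r r0 r_common] := chain_common_row A_chain (ex_intro2 _ _ setT N_T A_T).
have [y0 _ Ty0] := (HA setT N_T r).2 (r_common _ N_T A_T).
exists y0.
  by apply: contra_neq r0 => T0y; apply: lc_row_eq0; rewrite -Ty0.
move=> E NE e Ee Te.
by rewrite Ty0; apply/(HA E NE)/r_common => //; apply: A_nz NE Ee Te.
Qed.
End RankOnePeeling.

Section PeelStep.
Variables (R : realType) (X : completeNormedModType R[i]).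
Local Notation C := R[i].
Variables (N : set (set X)) (Phi : set X -> set X) (k : nat) (T : X -> X).
Variable v : 'I_k.+1 -> X.
Hypotheses (hN : nest N) (hPhi : support_function N Phi).
Hypotheses (T_lin : linear_map T) (T_cont : continuous T).
Hypothesis T_maps : forall E, N E -> T @` E `<=` Phi E.
Hypotheses (v_indep : indep v) (T_range : range T = [set lc v c | c in setT]).

(* A vector T y0 common to all nonzero images, with nonzero p-th coordinate
   (provided by nest_common_image_vector). *)
Variables (y0 : X) (p : 'I_k.+1).
Local Notation coord := (range_coord T_range).
Hypotheses (y0p : coord y0 p != 0) (y0_common : common_image_vector N T (T y0)).

Definition pivot (y : X) : C := coord y p / coord y0 p.
Definition rank_one_part (y : X) : X := pivot y *: T y0.
Definition remainder (y : X) : X := T y - rank_one_part y.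

Lemma pivot_linear (a : C) y z : pivot (a *: y + z) = a * pivot y + pivot z.
Proof. by rewrite /pivot (range_coord_linear T_lin v_indep) mulrDl mulrA. Qed.

Lemma pivot_eq0 y : T y = 0 -> pivot y = 0.
Proof.
move=> Ty; rewrite /pivot.
have -> : coord y = fun=> 0 by apply: range_coord_eq; rewrite // Ty lc0.
by rewrite mul0r.
Qed.

Lemma pivotZ (a : C) y : pivot (a *: y) = a * pivot y.
Proof.
have [T0 _ _ _] := linear_map_props T_lin.
by rewrite -[a *: y]addr0 pivot_linear (pivot_eq0 T0) addr0.
Qed.

Lemma pivot_y0 : pivot y0 = 1.
Proof. exact: divff. Qed.

Lemma pivot_continuous : continuous (pivot : X -> C^o).
Proof.
move=> y; apply: continuousM; last exact: cst_continuous.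
exact: (range_coord_continuous T_lin T_cont v_indep).
Qed.

Lemma Phi_subspace E : N E -> Defs.subspace (Phi E).
Proof. by move=> NE; apply: nest_subspace hN _; exact: hPhi.1. Qed.

Lemma rank_one_part_M : M_Phi N Phi rank_one_part.
Proof.
split; first split.
- by move=> a y z; rewrite /rank_one_part pivot_linear scalerDl scalerA.
- by move=> y; apply: continuousZ; [exact: pivot_continuous | exact: cst_continuous].
move=> E NE _ [e Ee <-]; have [P0 [_ PZ]] := Phi_subspace NE.
have [pe0|pe0] := eqVneq (pivot e) 0; first by rewrite /rank_one_part pe0 scale0r.
have Te : T e != 0 by apply: contra_neq pe0; exact: pivot_eq0.
by apply: PZ; apply: T_maps NE _ (y0_common NE Ee Te).
Qed.

Lemma rank_one_part_rank : has_rank rank_one_part 1.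
Proof.
have Ty0 : T y0 != 0.
  by apply/eqP => /pivot_eq0; rewrite pivot_y0; apply/eqP; exact: oner_neq0.
exists (fun=> T y0); split.
  move=> c; rewrite big_ord1 => /eqP; rewrite scaler_eq0 (negbTE Ty0) orbF.
  by move=> /eqP c0 i; rewrite (ord1 i).
apply/seteqP; split => [_ [y _ <-]|_ [c _ <-]].
  by exists (fun=> pivot y); rewrite // big_ord1.
exists (c ord0 *: y0) => //.
by rewrite big_ord1 /rank_one_part pivotZ pivot_y0 mulr1.
Qed.

Lemma remainder_M : M_Phi N Phi remainder.
Proof.
have [[R1_lin R1_cont] R1_maps] := rank_one_part_M.
split; first split.
- by move=> a y z; rewrite /remainder T_lin R1_lin opprD addrACA scalerBr.
- by move=> y; apply: continuousB; [exact: T_cont | exact: R1_cont].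
move=> E NE _ [e Ee <-]; have [_ [PD PZ]] := Phi_subspace NE.
rewrite /remainder -scaleN1r; apply: PD; first by apply: T_maps NE _ (imageP _ Ee).
by apply: PZ; apply: R1_maps NE _ (imageP _ Ee).
Qed.

(* The remainder kills the p-th coordinate, so its range is spanned by the
   other basis vectors. *)
Lemma remainder_rank : has_rank remainder k.
Proof.
exists (fun j => v (lift p j)); split; first exact: indep_lift.
apply/seteqP; split => [_ [y _ <-]|_ [c _ <-]].
  pose d i := coord y i - pivot y * coord y0 i.
  have -> : remainder y = lc v d.
    by rewrite /remainder /rank_one_part /d lcB lcZ -!(range_coordE T_range).
  have dp : d p = 0 by rewrite /d /pivot divfK ?subrr.
  by exists (fun j => d (lift p j)); rewrite // (lc_split v p) dp scale0r add0r.
have [y hy] := range_coord_surj v_indep T_range (ext p c 0).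
have py : pivot y = 0 by rewrite /pivot hy ext_p mul0r.
exists y => //.
rewrite /remainder /rank_one_part py scale0r subr0 (range_coordE T_range) hy.
by rewrite lc_ext scale0r add0r.
Qed.

End PeelStep.

Lemma peel_rank_one (R : realType) (X : completeNormedModType R[i])
    (N : set (set X)) (Phi : set X -> set X) (T : X -> X) (k : nat) :
  nest N -> support_function N Phi -> M_Phi N Phi T -> has_rank T k.+1 ->
  exists T1 : X -> X, [/\ has_rank T1 1, M_Phi N Phi T1,
    M_Phi N Phi (fun y => T y - T1 y) & has_rank (fun y => T y - T1 y) k].
Proof.
move=> hN hPhi [[T_lin T_cont] T_maps] [v [v_indep T_range]].
have [y0 Ty0 y0_common] := nest_common_image_vector hN T_lin v_indep T_range.
have [p y0p] : exists p, range_coord T_range y0 p != 0.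
  apply: contrapT => all0; move/eqP: Ty0; apply.
  rewrite (range_coordE T_range) -(lc0 v); congr lc; apply: funext => i.
  by apply/eqP; apply: contrapT => ci; apply: all0; exists i; apply/negP.
exists (rank_one_part T_range y0 p); split.
- exact: rank_one_part_rank.
- exact: rank_one_part_M.
- exact: remainder_M.
- exact: remainder_rank.
Qed.

Lemma rank0_zero (R : realType) (X : completeNormedModType R[i]) (T : X -> X) :
  has_rank T 0 -> forall x, T x = 0.
Proof.
move=> [v [_ T_range]] x; have : range T (T x) by exists x.
by rewrite T_range => -[c _ <-]; rewrite big_ord0.
Qed.

Unset Implicit Arguments.

Theorem mainTheorem7 (R : realType) (X : completeNormedModType R[i])
  (N : set (set X)) (Phi : set X -> set X) (T : X -> X) (n : nat) :
  nest N -> support_function N Phi -> M_Phi N Phi T -> has_rank T n ->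
  exists Ts : 'I_n -> X -> X,
    (forall i, has_rank (Ts i) 1 /\ M_Phi N Phi (Ts i)) /\
    (forall x, T x = \sum_(i < n) Ts i x).
Proof.
move=> hN hPhi; elim: n T => [|n IH] T hT hrk.
  by exists (fun _ _ => 0); split=> [[]|x] //; rewrite big_ord0 rank0_zero.
have [T1 [rk1 hT1 hT' rk']] := peel_rank_one hN hPhi hT hrk.
have [Ts [hTs sumTs]] := IH _ hT' rk'.
exists (fun i => if unlift ord0 i is Some j then Ts j else T1); split.
  by move=> i; case: (unlift ord0 i) => [j|] //; exact: hTs.
move=> x; rewrite big_ord_recl unlift_none.
under eq_bigr => i _ do rewrite liftK.
by rewrite -sumTs addrC subrK.
Qed.
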